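(* Let $p\in(1,\infty)$. Let $K>0$, $M\ge0$ and $\alpha<-(p-1)$, and define $F,G:[0,M]\to\mathbb{R}$ by $$F(x)=\frac1\alpha\big((x+K)^\alpha-(M+K)^\alpha\big),\qquad G(x)=\frac{p}{\alpha+p-1}(x+K)^{\frac{\alpha+p-1}{p}}.$$ Then there exists $C>0$ depending only on $p$ such that for all $x,y\in[0,M]$ and all $a,b\ge0$, $$|x-y|^{p-2}(x-y)\big(F(x)a^p-F(y)b^p\big)\ge\frac12|G(x)-G(y)|^p\max\{a^p,b^p\}-C\Big(1+\Big(\frac{|\alpha+p-1|}{|\alpha|}\Big)^p\Big)\max\{|G(x)|^p,|G(y)|^p\}|a-b|^p.$$
   Context: Convention: for $x=y$ the factor $|x-y|^{p-2}(x-y)$ is interpreted as $0$. *)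

From HB Require Import structures.
From mathcomp Require Import all_boot all_order all_algebra.
From mathcomp Require Import all_classical all_reals all_analysis.
Set Implicit Arguments. Unset Strict Implicit. Unset Printing Implicit Defensive.
Import Order.TTheory GRing.Theory Num.Theory.
Local Open Scope ring_scope.

(* |t|^(p-2) t, interpreted as 0 when t = 0 (convention of the paper). *)
Definition sgpow (R : realType) (p t : R) : R :=
  if t == 0 then 0 else `|t| `^ (p - 2) * t.

Definition Ffun (R : realType) (alpha K M x : R) : R :=
  alpha^-1 * ((x + K) `^ alpha - (M + K) `^ alpha).

Definition Gfun (R : realType) (p alpha K x : R) : R :=
  p / (alpha + p - 1) * (x + K) `^ ((alpha + p - 1) / p).

(* Put u = x + K.  Then F = f - f (M + K) and G = g with f u = u^A / A and
   g u = p / (A + p - 1) * u^((A + p - 1) / p); both increase on (0, oo), g is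
   concave and negative, and f' = (g')^p.  For s < r this gives Hoelder's
   inequality (g r - g s)^p <= (r - s)^(p-1) (f r - f s) and, by concavity,
   (g r - g s)^(p-1) g r <= (r - s)^(p-1) f r.  When a <= b the first bound
   suffices, because f r <= f (M + K).  When b < a the two bounds leave
   (g r - g s)^(p-1) ((g r - g s) a^p + g s (a^p - b^p)); convexity,
   a^p - b^p <= p a^(p-1) (a - b), and Young's inequality move the negative
   part into half of the main term plus (2 p |g s| (a - b))^p, so C = (2p)^p.
   The case x < y follows by symmetry, as |t|^(p-2) t is odd. *)

From HB Require Import structures.
From mathcomp Require Import all_boot all_order all_algebra.
From mathcomp Require Import all_classical all_reals all_analysis.
From mathcomp Require Import ring lra.
Import Order.TTheory GRing.Theory Num.Theory.
Set Implicit Arguments. Unset Strict Implicit. Unset Printing Implicit Defensive.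
Local Open Scope ring_scope.

Section PowR.
Context {R : realType}.
Implicit Types p r s t u v : R.

Lemma le0_ger_powR r s t : r <= 0 -> 0 < s -> s <= t -> t `^ r <= s `^ r.
Proof.
move=> r0 s0 st; have t0 := lt_le_trans s0 st.
rewrite -[r]opprK !(powRN _ (- r)) lef_pV2 ?posrE ?powR_gt0 //.
apply: ge0_ler_powR; rewrite ?oppr_ge0 ?nnegrE //; exact: ltW.
Qed.

Lemma young_powR p u v : 1 < p -> 0 <= u -> 0 <= v ->
  p * u `^ (p - 1) * v <= (p - 1) * u `^ p + v `^ p.
Proof.
move=> p1 u0 v0; have p0 : 0 < p by lra.
set q := p / (p - 1); have q0 : 0 < q by rewrite divr_gt0 //; lra.
have pq : q^-1 + p^-1 = 1 by rewrite /q invf_div; field; lra.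
have := conjugate_powR (powR_ge0 u (p - 1)) v0 q0 p0 pq.
rewrite -powRrM (_ : (p - 1) * q = p); last by rewrite /q; field; lra.
have -> : (p - 1) * u `^ p + v `^ p = p * (u `^ p / q + v `^ p / p).
  by rewrite /q; field; lra.
by move=> H; rewrite -mulrA ler_wpM2l ?(ltW p0).
Qed.

Lemma young_powR_half p u v : 1 < p -> 0 <= u -> 0 <= v ->
  u `^ (p - 1) * v <= 2^-1 * u `^ p + (2 * v) `^ p.
Proof.
move=> p1 u0 v0; have p0 : 0 < p by lra.
have := powR_ge0 u p; have := powR_ge0 (2 * v) p.
have [vu|uv] := leP v (u / 2).
  have : u `^ (p - 1) * v <= u `^ (p - 1) * (u / 2) by rewrite ler_wpM2l ?powR_ge0.
  rewrite mulrA mulrC -mulrA -(mulr_powRB1 u0 p0); lra.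
have : u `^ (p - 1) * v <= (2 * v) `^ (p - 1) * (2 * v).
  by apply: ler_pM; rewrite ?powR_ge0 //; [apply: ge0_ler_powR|]; rewrite ?nnegrE; lra.
rewrite [X in _ <= X]mulrC mulr_powRB1; lra.
Qed.

Lemma is_derive_powR c r u : 0 < u ->
  is_derive u 1 (fun z => c * z `^ r) (c * (r * u `^ (r - 1))).
Proof.
move=> u0; have uin : u \in `]0, +oo[%R by rewrite in_itv /= u0.
have := is_deriveZ c (derivableP (@derivable_powR R 1 r u uin)).
by rewrite -derive1E powR_derive1.
Qed.

Lemma is_derive_mulr c u : is_derive u 1 (fun z => c * z) c.
Proof. by apply: is_derive_eq (is_deriveZ c (is_derive_id u 1)) _; rewrite -[RHS]mulr1. Qed.

Lemma ger0_is_derive_le (f df : R -> R) s r : s <= r ->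
  (forall z, s <= z <= r -> is_derive z 1 f (df z)) ->
  (forall z, s < z < r -> 0 <= df z) -> f s <= f r.
Proof.
move=> sr fd df0; have fd' z : z \in `[s, r] -> is_derive z 1 f (df z).
  by rewrite in_itv; apply: fd.
apply: (@ger0_derive1_ndecr _ f s r) => //.
- by move=> z /subset_itv_oo_cc /fd'.
- move=> z zin; have /fd' dz := subset_itv_oo_cc zin.
  by rewrite derive1E derive_val; apply: df0; move: zin; rewrite in_itv.
- by apply: derivable_within_continuous => z /fd'.
Qed.

Lemma powR_mul3_le p c u v w m : 0 <= c -> 0 <= u -> 0 <= v -> 0 <= w -> u `^ p <= m ->
  (c * u * v) `^ p <= c `^ p * (1 + w) * m * v `^ p.
Proof.
move=> c0 u0 v0 w0 um; rewrite powRM ?mulr_ge0 // powRM //.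
rewrite ler_wpM2r ?powR_ge0 // -mulrA ler_wpM2l ?powR_ge0 //.
have m0 : 0 <= m := le_trans (powR_ge0 _ _) um.
by apply: le_trans um _; rewrite ler_peMl ?lerDl.
Qed.

End PowR.

Lemma sgpowN (R : realType) (p t : R) : sgpow p (- t) = - sgpow p t.
Proof. by rewrite /sgpow oppr_eq0 normrN; case: eqP => _; rewrite ?oppr0 ?mulrN. Qed.

Lemma sgpow_gt0 (R : realType) (p t : R) : 0 < t -> sgpow p t = t `^ (p - 1).
Proof.
move=> t0; rewrite /sgpow gt_eqF // gtr0_norm // -{2}(powRr1 (ltW t0)) -powRD.
  by congr (_ `^ _); ring.
by rewrite (gt_eqF t0) implybT.
Qed.

Section PowerPotentials.
Variables (R : realType) (p A : R).
Hypotheses (p1 : 1 < p) (hA : A < - (p - 1)).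
Implicit Types s r u L a b : R.

Local Notation B := ((A + p - 1) / p).
Local Notation f u := (A^-1 * u `^ A).
Local Notation g u := (p / (A + p - 1) * u `^ B).

Let p_gt0 : 0 < p. Proof. by have := p1; lra. Qed.
Let A_lt0 : A < 0. Proof. by have := p1; have := hA; lra. Qed.
Let Ap1_lt0 : A + p - 1 < 0. Proof. by have := p1; have := hA; lra. Qed.
Let B_lt0 : B < 0. Proof. by rewrite pmulr_llt0 ?invr_gt0. Qed.
Let k_lt0 : p / (A + p - 1) < 0. Proof. by rewrite pmulr_rlt0 ?invr_lt0. Qed.
Let k_le_invA : p / (A + p - 1) <= A^-1.
Proof.
have -> : p / (A + p - 1) = A^-1 + (p - 1) * (A - 1) / (A * (A + p - 1)).
  by field; rewrite !lt_eqF.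
rewrite gerDl pmulr_lle0 ?invr_gt0 ?nmulr_rgt0 // pmulr_rle0; by have := p1; have := A_lt0; lra.
Qed.

Let f_le0 L : 0 < L -> f L <= 0.
Proof. by move=> L0; rewrite nmulr_rle0 ?invr_lt0 ?powR_ge0. Qed.

Lemma is_derive_f u : 0 < u -> is_derive u 1 (fun z => f z) (u `^ (A - 1)).
Proof.
by move=> u0; apply: is_derive_eq (is_derive_powR _ _ u0) _; rewrite mulrA mulVf ?mul1r ?lt_eqF.
Qed.

Lemma is_derive_g u : 0 < u -> is_derive u 1 (fun z => g z) (u `^ (B - 1)).
Proof.
move=> u0; apply: is_derive_eq (is_derive_powR _ _ u0) _.
have kB : p / (A + p - 1) * B = 1 by field; rewrite gt_eqF ?lt_eqF.
by rewrite mulrA kB mul1r.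
Qed.

Lemma g_incr_ge_slope s r : 0 < s -> s <= r -> (r - s) * r `^ (B - 1) <= g r - g s.
Proof.
move=> s0 sr; set c := r `^ (B - 1).
suff : g s - c * s <= g r - c * r by lra.
apply: (@ger0_is_derive_le _ (fun z => g z - c * z) (fun z => z `^ (B - 1) - c)) => // z.
  move=> /andP[sz _]; have z0 : 0 < z by lra.
  have := is_derive_g z0; have := is_derive_mulr c z.
  by move=> *; apply: is_deriveB.
move=> /andP[sz zr]; rewrite subr_ge0.
by apply: le0_ger_powR; [have := B_lt0; lra | lra | exact: ltW].
Qed.

Lemma ler_g s r : 0 < s -> s <= r -> g s <= g r.
Proof.
move=> s0 sr; rewrite -subr_ge0; apply: le_trans (g_incr_ge_slope s0 sr).
by rewrite mulr_ge0 ?powR_ge0 // subr_ge0.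
Qed.

Lemma g_incr_holder s r : 0 < s -> s < r ->
  (g r - g s) `^ p <= (r - s) `^ (p - 1) * (f r - f s).
Proof.
move=> s0 sr; set D := g r - g s; set T := (r - s) `^ (p - 1).
have rs0 : 0 < r - s by rewrite subr_gt0.
have D0 : 0 <= D by rewrite subr_ge0 ler_g // ltW.
have T0 : 0 < T by rewrite powR_gt0.
set e := D / (r - s); have e0 : 0 <= e by rewrite divr_ge0 // ltW.
have epD : e `^ p * (r - s) = e `^ (p - 1) * D.
  by rewrite -(mulr_powRB1 e0 p_gt0) /e; field; rewrite gt_eqF.
have eT : e `^ (p - 1) * T = D `^ (p - 1).
  rewrite /e powRM //; last by rewrite invr_ge0 ltW.
  by rewrite -powR_inv1 ?ltW // -powRrM mulN1r powRN mulfVK // gt_eqF // powR_gt0.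
(* Hoelder for the integral of g' over [s, r]: f + c1 id - c2 g is nondecreasing,
   its derivative being nonnegative by Young's inequality since (g')^p = f'. *)
set c1 := (p - 1) * e `^ p; set c2 := p * e `^ (p - 1).
suff : f s + c1 * s - c2 * g s <= f r + c1 * r - c2 * g r.
  move=> phi_sr.
  have h1 : c1 * r - c1 * s = (p - 1) * (e `^ (p - 1) * D) by rewrite -epD /c1; ring.
  have h2 : c2 * g r - c2 * g s = p * (e `^ (p - 1) * D) by rewrite /c2 /D; ring.
  have : e `^ (p - 1) * D <= f r - f s by lra.
  by rewrite -(ler_pM2r T0) [_ * D]mulrC -mulrA eT mulr_powRB1 // mulrC.
apply: (@ger0_is_derive_le _ (fun z => f z + c1 * z - c2 * g z)
    (fun z => z `^ (A - 1) + c1 - c2 * z `^ (B - 1)) _ _ (ltW sr)) => z.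
  move=> /andP[sz _]; have z0 : 0 < z by lra.
  have := is_derive_f z0; have := is_derive_mulr c1 z; have := is_derive_g z0.
  by move=> *; apply: is_deriveB.
move=> _.
have := young_powR p1 e0 (powR_ge0 z (B - 1)).
rewrite -powRrM (_ : (B - 1) * p = A - 1); last by field; rewrite gt_eqF.
rewrite /c1 /c2; lra.
Qed.

Lemma g_incr_powR_g_le s r : 0 < s -> s <= r ->
  (g r - g s) `^ (p - 1) * g r <= (r - s) `^ (p - 1) * f r.
Proof.
move=> s0 sr; have r0 : 0 < r by lra.
set D := g r - g s; set c := r `^ (B - 1).
have rsc0 : 0 <= (r - s) * c by rewrite mulr_ge0 ?powR_ge0 // subr_ge0.
have powA : (r - s) `^ (p - 1) * r `^ A = ((r - s) * c) `^ (p - 1) * r `^ B.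
  rewrite powRM ?powR_ge0 ?subr_ge0 // -powRrM -mulrA -powRD; last by rewrite (gt_eqF r0) implybT.
  by congr (_ * r `^ _); field; rewrite gt_eqF.
have : (r - s) `^ (p - 1) * r `^ A <= D `^ (p - 1) * r `^ B.
  rewrite powA ler_wpM2r ?powR_ge0 //.
  apply: ge0_ler_powR; rewrite ?nnegrE ?subr_ge0 ?ler_g ?(g_incr_ge_slope s0 sr) //.
  by have := p1; lra.
have invA : A^-1 < 0 by rewrite invr_lt0.
move=> /(ler_wnM2l (ltW invA)); rewrite [X in _ <= X]mulrCA.
by apply: le_trans; rewrite mulrCA ler_wpM2r // mulr_ge0 ?powR_ge0.
Qed.

Lemma pairing_ge_of_le s r L a b : 0 < s -> s < r -> r <= L -> 0 <= a -> a <= b ->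
  (g r - g s) `^ p * b `^ p
  <= (r - s) `^ (p - 1) * ((f r - f L) * a `^ p - (f s - f L) * b `^ p).
Proof.
move=> s0 sr rL a0 ab; have r0 : 0 < r by lra.
set T := (r - s) `^ (p - 1); have T0 : 0 <= T := powR_ge0 _ _.
have frL : f r <= f L.
  by rewrite ler_wnM2l ?invr_le0 ?(ltW A_lt0) // le0_ger_powR // ltW.
have abp : a `^ p <= b `^ p.
  by apply: ge0_ler_powR; rewrite ?nnegrE ?(ltW p_gt0) ?(le_trans a0 ab).
have : (g r - g s) `^ p * b `^ p <= T * (f r - f s) * b `^ p.
  by rewrite ler_wpM2r ?powR_ge0 ?g_incr_holder.
have : 0 <= T * (f r - f L) * (a `^ p - b `^ p).
  by rewrite mulr_le0 ?mulr_ge0_le0 ?subr_le0.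
lra.
Qed.

Lemma pairing_ge_of_ge s r L a b : 0 < s -> s < r -> r <= L -> 0 <= b -> b <= a ->
  2^-1 * (g r - g s) `^ p * a `^ p - (2 * p * `|g s| * (a - b)) `^ p
  <= (r - s) `^ (p - 1) * ((f r - f L) * a `^ p - (f s - f L) * b `^ p).
Proof.
move=> s0 sr rL b0 ba; have a0 := le_trans b0 ba.
set D := g r - g s; set T := (r - s) `^ (p - 1); have T0 : 0 <= T := powR_ge0 _ _.
have D0 : 0 <= D by rewrite subr_ge0 ler_g // ltW.
have gs0 : g s <= 0 by rewrite nmulr_rle0 ?powR_ge0.
have abp : b `^ p <= a `^ p.
  by apply: ge0_ler_powR; rewrite ?nnegrE ?(ltW p_gt0).
have Dp : D `^ p = D * D `^ (p - 1) by rewrite mulr_powRB1.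
have gr : g r = D + g s by rewrite /D; ring.
have hol : D `^ p * b `^ p <= T * (f r - f s) * b `^ p.
  by rewrite ler_wpM2r ?powR_ge0 ?g_incr_holder.
have key : D `^ (p - 1) * g r * (a `^ p - b `^ p) <= T * (f r - f L) * (a `^ p - b `^ p).
  rewrite ler_wpM2r ?subr_ge0 //; apply: le_trans (g_incr_powR_g_le s0 (ltW sr)) _.
  by rewrite ler_wpM2l // lerDl oppr_ge0 f_le0 //; lra.
have young : a `^ p - b `^ p <= p * a `^ (p - 1) * (a - b).
  have := young_powR p1 a0 b0; rewrite -(mulr_powRB1 a0 p_gt0); lra.
have young' : D `^ (p - 1) * `|g s| * (a `^ p - b `^ p)
    <= D `^ (p - 1) * `|g s| * (p * a `^ (p - 1) * (a - b)).
  by rewrite ler_wpM2l // mulr_ge0 ?powR_ge0.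
have v0 : 0 <= p * `|g s| * (a - b) by rewrite !mulr_ge0 ?subr_ge0 // ltW.
have split := young_powR_half p1 (mulr_ge0 D0 a0) v0.
rewrite [(D * a) `^ p]powRM // [(D * a) `^ _]powRM // !mulrA in split.
set err := (2 * p * `|g s| * (a - b)) `^ p in split *.
rewrite gr in key; rewrite ler0_norm // in young' split; rewrite Dp in hol split *.
lra.
Qed.

Lemma pairing_ge s r L a b : 0 < s -> s < r -> r <= L -> 0 <= a -> 0 <= b ->
  2^-1 * (g r - g s) `^ p * Num.max (a `^ p) (b `^ p) - (2 * p * `|g s| * `|a - b|) `^ p
  <= (r - s) `^ (p - 1) * ((f r - f L) * a `^ p - (f s - f L) * b `^ p).
Proof.
move=> s0 sr rL a0 b0; have [ab|/ltW ba] := leP a b.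
  rewrite max_r; last by apply: ge0_ler_powR; rewrite ?nnegrE ?(ltW p_gt0).
  apply: le_trans (pairing_ge_of_le s0 sr rL a0 ab).
  have := powR_ge0 (2 * p * `|g s| * `|a - b|) p.
  have := mulr_ge0 (powR_ge0 (g r - g s) p) (powR_ge0 b p); lra.
rewrite max_l; last by apply: ge0_ler_powR; rewrite ?nnegrE ?(ltW p_gt0).
by rewrite [`|a - b|]ger0_norm ?subr_ge0 //; apply: pairing_ge_of_ge.
Qed.

End PowerPotentials.

Theorem mainTheorem20 (R : realType) (p : R) (hp : 1 < p) :
  exists C : R, 0 < C /\
    forall (K M alpha : R), 0 < K -> 0 <= M -> alpha < - (p - 1) ->
    forall (x y a b : R), 0 <= x <= M -> 0 <= y <= M -> 0 <= a -> 0 <= b ->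
      sgpow p (x - y) * (Ffun alpha K M x * a `^ p - Ffun alpha K M y * b `^ p)
      >= 2^-1 * `|Gfun p alpha K x - Gfun p alpha K y| `^ p
            * Num.max (a `^ p) (b `^ p)
         - C * (1 + (`|alpha + p - 1| / `|alpha|) `^ p)
             * Num.max (`|Gfun p alpha K x| `^ p) (`|Gfun p alpha K y| `^ p)
             * `|a - b| `^ p.
Proof.
exists ((2 * p) `^ p); split; first by rewrite powR_gt0 //; lra.
move=> K M A K0 M0 hA x y a b /andP[x0 xM] /andP[y0 yM] a0 b0.
wlog yx : x y a b x0 xM y0 yM a0 b0 / y < x.
  move=> H; case: (ltgtP y x) => [/H|xy|<-]; [exact | |].
    have := H y x b a y0 yM x0 xM b0 a0 xy.
    rewrite -[y - x]opprB sgpowN mulNr -mulrN opprB distrC (distrC b).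
    by rewrite (maxC (b `^ p)) (maxC (`|Gfun p A K y| `^ p)).
  rewrite !subrr /sgpow eqxx mul0r normr0 powR0; last by rewrite gt_eqF //; lra.
  by rewrite mulr0 mul0r sub0r oppr_le0 !mulr_ge0 ?powR_ge0 ?addr_ge0 ?le_max ?powR_ge0.
have sK : 0 < y + K by lra.
have srK : y + K < x + K by lra.
have rLK : x + K <= M + K by lra.
have := pairing_ge hp hA sK srK rLK a0 b0.
rewrite (_ : x + K - (y + K) = x - y) -?sgpow_gt0 ?subr_gt0 //; last by ring.
rewrite /Ffun /Gfun ![A^-1 * (_ - _)]mulrBr [`|p / _ * _ - _|]ger0_norm; last first.
  by rewrite subr_ge0 (ler_g hp hA sK (ltW srK)).
apply: le_trans; rewrite lerD2l lerN2.
apply: powR_mul3_le; rewrite ?normr_ge0 ?powR_ge0 //; first lra.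
by rewrite le_max [X in _ || X]lexx orbT.
Qed.
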